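(* Let $G$ be an infinite group and let $\mu$ be a (not necessarily symmetric) finitely supported generating probability measure on $G$. Then the Laplacian $\Delta_\mu:\mathbb{R}^G\to\mathbb{R}^G$ is surjective.
   Context: $\mu$ is generating if the semigroup generated by $\operatorname{supp}\mu$ is $G$. The Laplacian is defined by $\Delta_\mu f(x)=f(x)-\sum_{s\in\operatorname{supp}\mu}\mu(s)f(xs)$ for $f:G\to\mathbb{R}$. *)

From Stdlib Require Import Reals List.
Import ListNotations.
Open Scope R_scope.

Record Group := {
  carrier :> Type;
  gmul : carrier -> carrier -> carrier;
  gone : carrier;
  ginv : carrier -> carrier;
  gmulA : forall x y z, gmul x (gmul y z) = gmul (gmul x y) z;
  gmul1l : forall x, gmul gone x = x;
  gmulVl : forall x, gmul (ginv x) x = gone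
}.

Definition infinite_group (G : Group) : Prop :=
  forall l : list G, exists g : G, ~ In g l.

Definition supp {G : Group} (mu : G -> R) (s : G) : Prop := mu s <> 0.

(* S is an exact, duplicate-free enumeration of the support of mu
   (so mu is finitely supported iff such an S exists). *)
Definition enumerates_supp {G : Group} (mu : G -> R) (S : list G) : Prop :=
  NoDup S /\ forall s, In s S <-> supp mu s.

Definition sum_list {G : Group} (S : list G) (F : G -> R) : R :=
  fold_right (fun s acc => F s + acc) 0 S.

Definition fin_prob_measure {G : Group} (mu : G -> R) (S : list G) : Prop :=
  enumerates_supp mu S /\ (forall s, 0 <= mu s) /\ sum_list S mu = 1.

Definition gprod {G : Group} (l : list G) : G := fold_right (gmul G) (gone G) l.

(* mu is generating: the semigroup generated by supp mu is all of G,
   i.e. every element is a product of a nonempty finite word in supp mu. *)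
Definition generating {G : Group} (mu : G -> R) : Prop :=
  forall g : G, exists l : list G,
    l <> [] /\ Forall (supp mu) l /\ gprod l = g.

Definition laplacian {G : Group} (mu : G -> R) (S : list G) (f : G -> R) (x : G) : R :=
  f x - sum_list S (fun s => mu s * f (gmul G x s)).

From Stdlib Require Import Reals List Lra Lia Cantor ClassicalEpsilon FunctionalExtensionality.
Import ListNotations.
Open Scope R_scope.

(* The equation [laplacian mu S f = g] is a row-finite linear system: the equation
   at [x] involves only the unknowns [f x] and [f (x s)], [s] in the support.
   Since [G] is generated by the finite support of [mu], it is countable, and a
   row-finite system in countably many unknowns is solvable as soon as no finite
   combination of equations reads [0 = c] with [c <> 0]: the unknowns can be fixed
   one at a time.  For the Laplacian no nontrivial finite combination of rows even
   vanishes: its coefficient function [phi] is finitely supported and satisfies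
   [phi z = sum_s mu s * phi (z s^-1)], so by the maximum principle and since [mu]
   generates [G], a maximum of [phi] is attained everywhere; on an infinite group
   this forces [phi <= 0], and likewise [-phi <= 0]. *)

Section LinearCombinations.
Context {T : Type}.

Definition lc_eval (h : T -> R) (L : list (T * R)) : R :=
  fold_right (fun p acc => snd p * h (fst p) + acc) 0 L.

Definition lc_scale (c : R) (L : list (T * R)) : list (T * R) :=
  map (fun p => (fst p, c * snd p)) L.

Lemma lc_eval_app h L1 L2 : lc_eval h (L1 ++ L2) = lc_eval h L1 + lc_eval h L2.
Proof. induction L1 as [|p L1 IH]; simpl; [lra|]. unfold lc_eval in *. rewrite IH. lra. Qed.

Lemma lc_eval_scale h c L : lc_eval h (lc_scale c L) = c * lc_eval h L.
Proof. induction L as [|p L IH]; simpl; [lra|]. unfold lc_eval in *. simpl. rewrite IH. lra. Qed.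

End LinearCombinations.

Fixpoint sumN (n : nat) (F : nat -> R) : R :=
  match n with O => 0 | S n => sumN n F + F n end.

Lemma sumN_ext n F F' : (forall i, (i < n)%nat -> F i = F' i) -> sumN n F = sumN n F'.
Proof. induction n as [|n IH]; simpl; intros E; [lra|]. rewrite IH, E; auto. Qed.

Lemma sumN_lin n b c b' h :
  sumN n (fun i => (b i + c * b' i) * h i)
  = sumN n (fun i => b i * h i) + c * sumN n (fun i => b' i * h i).
Proof. induction n as [|n IH]; simpl; [lra|]. rewrite IH. lra. Qed.

Lemma sumN_0 n h : sumN n (fun i => 0 * h i) = 0.
Proof. induction n as [|n IH]; simpl; [|rewrite IH]; lra. Qed.

Lemma sumN_delta n k h :
  (k < n)%nat -> sumN n (fun i => (if Nat.eqb i k then 1 else 0) * h i) = h k.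
Proof.
  induction n as [|n IH]; simpl; intros Hk; [lia|].
  destruct (Nat.eqb_spec n k) as [->|Hne].
  - rewrite (sumN_ext k _ (fun i => 0 * h i)), sumN_0.
    + lra.
    + intros i Hi. destruct (Nat.eqb_spec i k); [lia|lra].
  - rewrite IH; [lra|lia].
Qed.

Lemma lc_eval_dense_below n (l : list (nat * R)) :
  Forall (fun p => (fst p < n)%nat) l ->
  exists b, forall h, lc_eval h l = sumN n (fun i => b i * h i).
Proof.
  induction l as [|[k c] l IH]; intros Hl.
  - exists (fun _ => 0). intro h. rewrite sumN_0. reflexivity.
  - inversion Hl as [|? ? Hk Hl']; subst. destruct (IH Hl') as [b Hb].
    exists (fun i => b i + c * (if Nat.eqb i k then 1 else 0)). intro h.
    rewrite sumN_lin, sumN_delta by exact Hk. simpl in *. rewrite <- Hb.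
    unfold lc_eval. simpl. lra.
Qed.

Lemma lc_eval_dense (l : list (nat * R)) :
  exists n b, forall h, lc_eval h l = sumN n (fun i => b i * h i).
Proof.
  exists (S (list_max (map fst l))). apply lc_eval_dense_below.
  apply Forall_forall. intros p Hp.
  assert (Hmax : Forall (fun k => (k <= list_max (map fst l))%nat) (map fst l))
    by (apply list_max_le; lia).
  rewrite Forall_forall in Hmax. specialize (Hmax (fst p) (in_map fst l p Hp)). lia.
Qed.

Section RowFiniteSystem.
Context {I : Type} (row : I -> list (nat * R)) (rhs : I -> R).

Definition combined_row (L : list (I * R)) (h : nat -> R) : R :=
  lc_eval (fun x => lc_eval h (row x)) L.

Hypothesis compatible :
  forall L, (forall h, combined_row L h = 0) -> lc_eval rhs L = 0.

Definition expresses (n : nat) (Lb : list (I * R) * (nat -> R)) : Prop :=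
  forall h, h n = combined_row (fst Lb) h + sumN n (fun i => snd Lb i * h i).

(* If the [n]-th unknown is determined by the equations and the earlier
   unknowns, its value is forced; otherwise it is free and set to [0]. *)
Definition next_value (n : nat) (w : nat -> R) : R :=
  match excluded_middle_informative (exists Lb, expresses n Lb) with
  | left H => let Lb := proj1_sig (constructive_indefinite_description _ H) in
              lc_eval rhs (fst Lb) + sumN n (fun i => snd Lb i * w i)
  | right _ => 0
  end.

Fixpoint prefix (n : nat) : nat -> R :=
  match n with
  | O => fun _ => 0
  | S m => fun i => if Nat.ltb i m then prefix m i else next_value m (prefix m)
  end.

Definition solution (n : nat) : R := prefix (S n) n.

Lemma solution_next n : solution n = next_value n (prefix n).
Proof. unfold solution. simpl. rewrite Nat.ltb_irrefl. reflexivity. Qed.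

Lemma prefix_solution m i : (i < m)%nat -> prefix m i = solution i.
Proof.
  induction m as [|m IH]; intros Him; [lia|]. simpl.
  destruct (Nat.ltb_spec i m); [auto|].
  replace i with m by lia. symmetry. apply solution_next.
Qed.

Lemma solution_extends n L b :
  (forall h, combined_row L h = sumN n (fun i => b i * h i)) ->
  lc_eval rhs L = sumN n (fun i => b i * solution i).
Proof.
  revert L b. induction n as [|n IH]; intros L b HL; simpl in *.
  - apply compatible. exact HL.
  - rewrite solution_next. unfold next_value.
    destruct (excluded_middle_informative _) as [Hex|Hfree].
    + destruct (constructive_indefinite_description _ Hex) as [[L0 b0] H0].
      unfold expresses in H0. simpl in H0 |- *.
      assert (Hlhs : forall h, combined_row (L ++ lc_scale (- b n) L0) h
                          = sumN n (fun i => (b i + b n * b0 i) * h i)).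
      { intro h. unfold combined_row in *.
        rewrite lc_eval_app, lc_eval_scale, sumN_lin, HL, (H0 h). simpl. ring. }
      specialize (IH _ _ Hlhs).
      rewrite lc_eval_app, lc_eval_scale, sumN_lin in IH.
      rewrite (sumN_ext n (fun i => b0 i * prefix n i) (fun i => b0 i * solution i))
        by (intros i Hi; rewrite prefix_solution; auto).
      lra.
    + destruct (Req_dec (b n) 0) as [Hb|Hb].
      * rewrite Hb, Rmult_0_l, Rplus_0_r. apply IH.
        intro h. rewrite HL, Hb. lra.
      * exfalso. apply Hfree.
        exists (lc_scale (/ b n) L, fun i => 0 + (- / b n) * b i). intro h. simpl.
        unfold combined_row in *. rewrite lc_eval_scale, sumN_lin, HL.
        rewrite sumN_0. field. exact Hb.
Qed.

End RowFiniteSystem.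

Theorem row_finite_system_solvable {I : Type} (row : I -> list (nat * R)) (rhs : I -> R) :
  (forall L, (forall h, combined_row row L h = 0) -> lc_eval rhs L = 0) ->
  exists v, forall x, lc_eval v (row x) = rhs x.
Proof.
  intros compatible. exists (solution row rhs). intro x.
  destruct (lc_eval_dense (row x)) as [n [b Hb]].
  rewrite Hb. symmetry.
  replace (rhs x) with (lc_eval rhs [(x, 1)]) by (simpl; lra).
  apply solution_extends; [exact compatible|].
  intro h. unfold combined_row. simpl. rewrite Hb. lra.
Qed.

Fixpoint words {T : Type} (A : list T) (k : nat) : list (list T) :=
  match k with
  | O => [[]]
  | S k => flat_map (fun w => map (fun a => a :: w) A) (words A k)
  end.

Lemma in_words {T : Type} (A l : list T) :
  Forall (fun a => In a A) l -> In l (words A (length l)).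
Proof.
  induction l as [|a l IH]; simpl; intros Hl; [auto|]. inversion Hl; subst.
  apply in_flat_map. exists l. split; [auto|]. apply (in_map (fun a0 => a0 :: l)). auto.
Qed.

Definition enum_words {T : Type} (A : list T) (n : nat) : list T :=
  let '(k, j) := Cantor.of_nat n in nth j (words A k) [].

Lemma enum_words_surj {T : Type} (A l : list T) :
  Forall (fun a => In a A) l -> exists n, enum_words A n = l.
Proof.
  intros Hl. destruct (In_nth _ _ [] (in_words A l Hl)) as [j [_ Hj]].
  exists (Cantor.to_nat (length l, j)). unfold enum_words.
  rewrite Cantor.cancel_of_to. exact Hj.
Qed.

Section GroupFacts.
Context {G : Group}.
Local Infix "·" := (gmul G) (at level 40, left associativity).

Lemma gmulV (x : G) : x · ginv G x = gone G.
Proof.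
  rewrite <- (gmul1l G (x · ginv G x)), <- (gmulVl G (ginv G x)) at 1.
  rewrite <- gmulA, (gmulA G (ginv G x) x), gmulVl, gmul1l. apply gmulVl.
Qed.

Lemma gmul1r (x : G) : x · gone G = x.
Proof. rewrite <- (gmulVl G x), gmulA, gmulV, gmul1l. reflexivity. Qed.

Lemma ginv_unique (x y : G) : x · y = gone G -> y = ginv G x.
Proof.
  intros H. rewrite <- (gmul1l G y), <- (gmulVl G x), <- gmulA, H. apply gmul1r.
Qed.

Lemma ginvM (x y : G) : ginv G (x · y) = ginv G y · ginv G x.
Proof.
  symmetry. apply ginv_unique.
  rewrite gmulA, <- (gmulA G x y), gmulV, gmul1r, gmulV. reflexivity.
Qed.

Lemma ginvK (x : G) : ginv G (ginv G x) = x.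
Proof. symmetry. apply ginv_unique, gmulVl. Qed.

Lemma ginv1 : ginv G (gone G) = gone G.
Proof. symmetry. apply ginv_unique, gmul1r. Qed.

Lemma gmul_eq_mulV (x s z : G) : x · s = z <-> x = z · ginv G s.
Proof.
  split; intros H; subst.
  - rewrite <- gmulA, gmulV, gmul1r. reflexivity.
  - rewrite <- gmulA, gmulVl, gmul1r. reflexivity.
Qed.

End GroupFacts.

Lemma generated_enumeration {G : Group} (mu : G -> R) (S : list G) :
  enumerates_supp mu S -> generating mu -> exists e : nat -> G, forall y, exists n, e n = y.
Proof.
  intros [_ HS] Hgen. exists (fun n => gprod (enum_words S n)). intros y.
  destruct (Hgen y) as [l [_ [Hl <-]]].
  destruct (enum_words_surj S l) as [n Hn].
  - eapply Forall_impl; [|exact Hl]. intros s Hs. apply HS, Hs.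
  - exists n. rewrite Hn. reflexivity.
Qed.

Section SumList.
Context {G : Group}.

Lemma sum_list_ext (l : list G) F F' :
  (forall s, In s l -> F s = F' s) -> sum_list l F = sum_list l F'.
Proof. induction l; simpl; intros E; [lra|]. rewrite E, IHl; auto. Qed.

Lemma sum_list_add (l : list G) F F' :
  sum_list l (fun s => F s + F' s) = sum_list l F + sum_list l F'.
Proof. induction l; simpl; [lra|]. rewrite IHl. lra. Qed.

Lemma sum_list_scal (l : list G) c F : sum_list l (fun s => c * F s) = c * sum_list l F.
Proof. induction l; simpl; [lra|]. rewrite IHl. lra. Qed.

Lemma sum_list_0 (l : list G) : sum_list l (fun _ => 0) = 0.
Proof. induction l; simpl; [|rewrite IHl]; lra. Qed.

Lemma sum_list_le_eq (l : list G) F F' :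
  (forall s, In s l -> F s <= F' s) -> sum_list l F = sum_list l F' ->
  forall s, In s l -> F s = F' s.
Proof.
  assert (Hle : forall l, (forall s, In s l -> F s <= F' s) -> sum_list l F <= sum_list l F').
  { induction l0 as [|a l0 IH]; simpl; intros H; [lra|].
    pose proof (H a (or_introl eq_refl)). pose proof (IH (fun s Hs => H s (or_intror Hs))). lra. }
  induction l as [|a l IH]; simpl; intros H E s Hs; [contradiction|].
  pose proof (H a (or_introl eq_refl)).
  pose proof (Hle l (fun s Hs => H s (or_intror Hs))).
  destruct Hs as [<-|Hs]; [lra|]. apply IH; auto. lra.
Qed.

Lemma lc_eval_map_sum_list (h : nat -> R) (l : list G) (k : G -> nat) (c : G -> R) :
  lc_eval h (map (fun s => (k s, c s)) l) = sum_list l (fun s => c s * h (k s)).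
Proof. induction l; simpl; [reflexivity|]. unfold lc_eval in *. simpl. rewrite IHl. reflexivity. Qed.

End SumList.

Lemma exists_max {T : Type} (F : T -> R) (X : list T) (x : T) :
  In x X -> exists x0, In x0 X /\ forall y, In y X -> F y <= F x0.
Proof.
  revert x. induction X as [|a X IH]; simpl; intros x Hx; [contradiction|].
  destruct X as [|b X].
  - exists a. split; [auto|]. intros y [<-|[]]. lra.
  - destruct (IH b (or_introl eq_refl)) as [x1 [Hx1 Hm]].
    destruct (Rle_dec (F a) (F x1)).
    + exists x1. split; [auto|]. intros y [<-|Hy]; auto.
    + exists a. split; [auto|]. intros y [<-|Hy]; [lra|]. specialize (Hm y Hy). lra.
Qed.

Definition dirac {T : Type} (x z : T) : R :=
  if excluded_middle_informative (x = z) then 1 else 0.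

Definition lc_coef {T : Type} (L : list (T * R)) (z : T) : R :=
  lc_eval (fun x => dirac x z) L.

Lemma lc_coef_supp {T : Type} (L : list (T * R)) y : lc_coef L y <> 0 -> In y (map fst L).
Proof.
  induction L as [|[x a] L IH]; unfold lc_coef, dirac in *; simpl; [lra|]. intros H.
  destruct (excluded_middle_informative (x = y)); [auto|]. right. apply IH. lra.
Qed.

Lemma sum_list_dirac {G : Group} (X : list G) x r :
  NoDup X -> In x X -> sum_list X (fun y => dirac x y * r y) = r x.
Proof.
  induction X as [|y X IH]; simpl; intros HX Hx; [contradiction|].
  inversion HX as [|? ? Hy HX']; subst. unfold dirac at 1.
  destruct (excluded_middle_informative (x = y)) as [<-|Hne].
  - rewrite (sum_list_ext X _ (fun _ => 0)), sum_list_0; [lra|].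
    intros z Hz. unfold dirac.
    destruct (excluded_middle_informative (x = z)); [subst; contradiction|lra].
  - destruct Hx as [->|Hx]; [contradiction|]. rewrite IH; auto. lra.
Qed.

Lemma lc_eval_coef {G : Group} (L : list (G * R)) (X : list G) r :
  NoDup X -> (forall p, In p L -> In (fst p) X) ->
  lc_eval r L = sum_list X (fun y => lc_coef L y * r y).
Proof.
  intros HX. induction L as [|[x a] L IH]; intros HL.
  - rewrite (sum_list_ext X _ (fun _ => 0)), sum_list_0; [reflexivity|].
    intros; unfold lc_coef; simpl; lra.
  - rewrite (sum_list_ext X _ (fun y => a * (dirac x y * r y) + lc_coef L y * r y))
      by (intros; unfold lc_coef; simpl; lra).
    rewrite sum_list_add, sum_list_scal, sum_list_dirac, <- IH; auto.
    + intros p Hp. apply HL. right. exact Hp.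
    + exact (HL (x, a) (or_introl eq_refl)).
Qed.

Section Laplacian.
Context {G : Group} (mu : G -> R) (S : list G).
Local Infix "·" := (gmul G) (at level 40, left associativity).

Definition coharmonic (phi : G -> R) : Prop :=
  forall z, phi z = sum_list S (fun s => mu s * phi (z · ginv G s)).

Lemma dirac_mulr x s z : dirac (x · s) z = dirac x (z · ginv G s).
Proof.
  pose proof (gmul_eq_mulV x s z). unfold dirac.
  destruct (excluded_middle_informative (x · s = z));
    destruct (excluded_middle_informative (x = z · ginv G s)); tauto.
Qed.

Lemma lc_eval_laplacian_dirac L z :
  lc_eval (laplacian mu S (fun y => dirac y z)) L
  = lc_coef L z - sum_list S (fun s => mu s * lc_coef L (z · ginv G s)).
Proof.
  induction L as [|[x a] L IH]; unfold lc_coef in *; simpl.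
  - rewrite (sum_list_ext S _ (fun _ => 0)), sum_list_0 by (intros; simpl; lra). lra.
  - rewrite IH. unfold laplacian.
    rewrite (sum_list_ext S (fun s => mu s * (a * _ + _)) (fun s => a * (mu s * dirac (x · s) z)
                                       + mu s * lc_eval (fun y => dirac y (z · ginv G s)) L))
      by (intros; rewrite dirac_mulr; simpl; lra).
    rewrite sum_list_add, sum_list_scal. lra.
Qed.

Definition laplacian_row (idx : G -> nat) (x : G) : list (nat * R) :=
  (idx x, 1) :: map (fun s => (idx (x · s), - mu s)) S.

Lemma lc_eval_laplacian_row idx h x :
  lc_eval h (laplacian_row idx x) = laplacian mu S (fun y => h (idx y)) x.
Proof.
  unfold laplacian_row, laplacian. simpl. fold (lc_eval h (map (fun s => (idx (x · s), - mu s)) S)).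
  rewrite lc_eval_map_sum_list, (sum_list_ext S _ (fun s => -1 * (mu s * h (idx (x · s))))) by (intros; lra).
  rewrite sum_list_scal. lra.
Qed.

Section MaximumPrinciple.
Hypothesis Hinf : infinite_group G.
Hypothesis Hmu : fin_prob_measure mu S.
Hypothesis Hgen : generating mu.

Lemma coharmonic_max_step phi z s :
  coharmonic phi -> (forall y, phi y <= phi z) -> In s S ->
  phi (z · ginv G s) = phi z.
Proof.
  destruct Hmu as [[_ HS] [Hnn Hsum]]. intros Hphi Hmax Hs.
  assert (Hmean : sum_list S (fun s => mu s * phi (z · ginv G s))
                  = sum_list S (fun s => mu s * phi z)).
  { rewrite <- Hphi, (sum_list_ext S _ (fun s => phi z * mu s)) by (intros; lra).
    rewrite sum_list_scal. change (sum_list S (fun s => mu s)) with (sum_list S mu).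
    rewrite Hsum. lra. }
  apply (Rmult_eq_reg_l (mu s)); [|apply HS, Hs].
  refine (sum_list_le_eq S _ _ _ Hmean s Hs).
  intros t _. apply Rmult_le_compat_l; auto.
Qed.

Lemma coharmonic_max_word phi z l :
  coharmonic phi -> (forall y, phi y <= phi z) -> Forall (supp mu) l ->
  phi (z · ginv G (gprod l)) = phi z.
Proof.
  destruct Hmu as [[_ HS] _]. intros Hphi Hmax.
  induction l as [|s l IH]; intros Hl; simpl.
  - rewrite ginv1, gmul1r. reflexivity.
  - inversion Hl as [|? ? Hs Hl']; subst. rewrite ginvM, gmulA, <- (IH Hl').
    apply coharmonic_max_step; [exact Hphi| |apply HS, Hs].
    intro y. rewrite (IH Hl'). apply Hmax.
Qed.

Lemma coharmonic_max_const phi z :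
  coharmonic phi -> (forall y, phi y <= phi z) -> forall y, phi y = phi z.
Proof.
  intros Hphi Hmax y.
  destruct (Hgen (ginv G y · z)) as [l [_ [Hl Hp]]].
  rewrite <- (coharmonic_max_word phi z l Hphi Hmax Hl), Hp, ginvM, ginvK, gmulA, gmulV, gmul1l.
  reflexivity.
Qed.

Lemma coharmonic_finsupp_nonpos phi (X : list G) :
  coharmonic phi -> (forall y, phi y <> 0 -> In y X) -> forall z, phi z <= 0.
Proof.
  intros Hphi Hsupp z. destruct (Rle_dec (phi z) 0) as [|Hpos]; [assumption|exfalso].
  assert (Hz : In z X) by (apply Hsupp; lra).
  destruct (exists_max phi X z Hz) as [x0 [Hx0 Hm]].
  assert (Hmax : forall y, phi y <= phi x0).
  { intro y. destruct (Req_dec (phi y) 0) as [E|E].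
    - specialize (Hm z Hz). lra.
    - apply Hm, Hsupp, E. }
  destruct (Hinf X) as [y Hy]. apply Hy, Hsupp.
  rewrite (coharmonic_max_const phi x0 Hphi Hmax y). specialize (Hm z Hz). lra.
Qed.

Lemma coharmonic_finsupp_zero phi (X : list G) :
  coharmonic phi -> (forall y, phi y <> 0 -> In y X) -> forall z, phi z = 0.
Proof.
  intros Hphi Hsupp z.
  assert (Hopp : coharmonic (fun y => - phi y)).
  { intro y. rewrite (sum_list_ext S _ (fun s => -1 * (mu s * phi (y · ginv G s)))) by (intros; lra).
    rewrite sum_list_scal, <- Hphi. lra. }
  pose proof (coharmonic_finsupp_nonpos phi X Hphi Hsupp z).
  assert (Hsupp' : forall y, - phi y <> 0 -> In y X) by (intros y Hy; apply Hsupp; lra).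
  pose proof (coharmonic_finsupp_nonpos _ X Hopp Hsupp' z).
  lra.
Qed.

Lemma laplacian_rows_independent L :
  (forall h, lc_eval (laplacian mu S h) L = 0) -> forall r, lc_eval r L = 0.
Proof.
  intros HL r.
  assert (Hzero : forall z, lc_coef L z = 0).
  { apply (coharmonic_finsupp_zero _ (map fst L)); [|apply lc_coef_supp].
    intro z. specialize (HL (fun y => dirac y z)).
    rewrite lc_eval_laplacian_dirac in HL. lra. }
  rewrite (lc_eval_coef L (nodup (fun x y => excluded_middle_informative (x = y)) (map fst L))).
  - rewrite (sum_list_ext _ _ (fun _ => 0)), sum_list_0; [reflexivity|].
    intros y _. rewrite Hzero. lra.
  - apply NoDup_nodup.
  - intros p Hp. apply nodup_In, in_map, Hp.
Qed.

End MaximumPrinciple.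

End Laplacian.

Theorem proposition1p6 (G : Group) (mu : G -> R) (S : list G)
  (Hinf : infinite_group G)
  (Hmu : fin_prob_measure mu S)
  (Hgen : generating mu) :
  forall g : G -> R, exists f : G -> R, forall x : G, laplacian mu S f x = g x.
Proof.
  intro g.
  destruct (generated_enumeration mu S (proj1 Hmu) Hgen) as [e He].
  destruct (choice (fun y n => e n = y) He) as [idx Hidx].
  destruct (row_finite_system_solvable (laplacian_row mu S idx) g) as [v Hv].
  - intros L HL. apply (laplacian_rows_independent mu S Hinf Hmu Hgen L).
    intro h. rewrite <- (HL (fun n => h (e n))). unfold combined_row.
    f_equal. extensionality x. rewrite lc_eval_laplacian_row.
    f_equal. extensionality y. rewrite Hidx. reflexivity.
  - exists (fun y => v (idx y)). intro x. rewrite <- lc_eval_laplacian_row. apply Hv.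
Qed.
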